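(* Let $\mathbb{F}$ be a field, $F\in M$ a non-zero inverse form, $(f,g)$ a viable ordered pair for $\mathcal{I}_F$, and $\Theta=\{\theta\in\mathcal{I}_F\cap\mathcal{L}: |\theta| \text{ is minimal}\}$. Then $\Theta=\{f\}$ if $|g|>|f|$, and otherwise $$\Theta=\{f\}\cup\{f+\psi g:\ \psi\in R \text{ a form with } |\psi|=|f|-|g|\}.$$
   Context: $R=\mathbb{F}[x,z]$, $M=\mathbb{F}[x^{-1},z^{-1}]$ with $R$-module structure $x^pz^q\circ x^{-u}z^{-v}=x^{p-u}z^{q-v}$ if $p\le u,q\le v$ and $0$ otherwise, extended bilinearly. An inverse form is a homogeneous element of $M$; $|\cdot|$ is total degree. $\mathcal{I}_F=\{\varphi\in R:\varphi\circ F=0\}$. $\mathcal{L}$ is the set of non-zero forms $\varphi\in R$ whose coefficient of $x^{|\varphi|}$ equals $1$. A viable ordered pair (VOP) for $\mathcal{I}_F$ is a pair $(f,g)$ of non-zero monic forms with $f\in\mathcal{L}$, $z\mid g$, $\mathcal{I}_F=\langle f,g\rangle$ and $|f|+|g|=2-|F|$. *)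

From HB Require Import structures.
From mathcomp Require Import all_boot all_order all_algebra.
From mathcomp Require Import mpoly.
Set Implicit Arguments. Unset Strict Implicit. Unset Printing Implicit Defensive.
Import Order.TTheory GRing.Theory.
Local Open Scope ring_scope.

(* R = K[x,z] is {mpoly K[2]}, variable 0 is x and variable 1 is z.
   M = K[x^-1,z^-1] is ALSO represented by {mpoly K[2]}: the monomial
   with exponent vector (u,v) encodes the inverse monomial x^-u z^-v. *)

Definition mon2 (a b : nat) : 'X_{1..2} :=
  [multinom (if (i : nat) == 0%N then a else b) | i < 2].

(* the R-module action  phi o F, extended bilinearly from
   x^p z^q o x^-u z^-v = x^(p-u) z^(q-v) if p<=u, q<=v, and 0 otherwise *)
Definition contract (K : fieldType) (phi F : {mpoly K[2]}) : {mpoly K[2]} :=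
  \sum_(m <- msupp phi) \sum_(u <- msupp F)
     (phi@_m * F@_u) *: (if (m <= u)%MM then 'X_[(u - m)%MM] else 0).

Definition is_form (K : fieldType) (p : {mpoly K[2]}) : Prop :=
  exists d : nat, p \is d.-homog.

(* total degree of a polynomial (for R); for an inverse form F the paper's
   |F| is the NEGATIVE of this number *)
Definition deg (K : fieldType) (p : {mpoly K[2]}) : nat := (msize p).-1.

Definition annih (K : fieldType) (F phi : {mpoly K[2]}) : Prop :=
  contract phi F = 0.

Definition inL (K : fieldType) (phi : {mpoly K[2]}) : Prop :=
  [/\ phi != 0, is_form phi & phi@_(mon2 (deg phi) 0) = 1].

Definition monic_form (K : fieldType) (p : {mpoly K[2]}) : Prop :=
  is_form p /\
  exists i : nat, [/\ (i <= deg p)%N, p@_(mon2 i (deg p - i)) = 1 &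
    forall j : nat, (i < j)%N -> p@_(mon2 j (deg p - j)) = 0].

(* viable ordered pair (f,g) for I_F;  |f| + |g| = 2 - |F| becomes
   deg f + deg g = 2 + deg F  since |F| = - deg F *)
Definition VOP (K : fieldType) (F f g : {mpoly K[2]}) : Prop :=
  [/\ f != 0 /\ g != 0, monic_form f /\ monic_form g,
      inL f /\ (exists h : {mpoly K[2]}, g = 'X_1 * h),
      (forall phi : {mpoly K[2]},
          annih F phi <-> exists a b : {mpoly K[2]}, phi = a * f + b * g)
    & (deg f + deg g = 2 + deg F)%N].

Definition inTheta (K : fieldType) (F theta : {mpoly K[2]}) : Prop :=
  [/\ annih F theta, inL theta &
      forall theta' : {mpoly K[2]}, annih F theta' -> inL theta' ->
        (deg theta <= deg theta')%N].

(** Write a homogeneous [theta] in [I_F = <f, g>] as [a * f + b * g]; taking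
    homogeneous components we may assume [a], [b] homogeneous of degrees
    [|theta| - |f|] and [|theta| - |g|].  Since [z] divides [g], the
    coefficient of [x^|theta|] in [theta] comes from [a * f] alone.  Hence
    [theta] in [L] forces [|theta| >= |f|], so [f] has minimal degree, and for
    [|theta| = |f|] the constant [a] must be [1], leaving [theta = f + b * g]
    with [b = 0] unless [|g| <= |f|]. *)
From HB Require Import structures.
From mathcomp Require Import all_boot all_order all_algebra.
From mathcomp Require Import mpoly.
Set Implicit Arguments. Unset Strict Implicit. Unset Printing Implicit Defensive.
Import GRing.Theory.
Local Open Scope ring_scope.

Section MPolyHomogComplements.
Variables (n : nat) (R : nzRingType).
Implicit Types (p a f : {mpoly R[n]}) (m : 'X_{1..n}).

Lemma mcoeff_mulX_eq0 (i : 'I_n) p m : m i = 0%N -> ('X_i * p)@_m = 0.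
Proof.
move=> mi0; rewrite mcoeffM big1 // => k /eqP m_eq.
rewrite mcoeffX; case: eqP => [Ui_eq|]; last by rewrite mul0r.
have := congr1 (fun m' : 'X_{1..n} => m' i) m_eq.
by rewrite mnmDE -Ui_eq mnm1E eqxx mi0.
Qed.

Lemma dhomog0_mpolyC p : p \is 0.-homog -> p = (p@_0)%:MP.
Proof.
move=> hp; apply/mpolyP => m; rewrite mcoeffC.
have [->|m_nz] := eqVneq m 0%MM; first by rewrite mulr1.
by rewrite mulr0; apply: (dhomog_nemf_coeff hp); rewrite mdeg_eq0.
Qed.

Lemma pihomogMr d e a f : f \is e.-homog ->
  pihomog mdeg d (a * f) =
  if (e <= d)%N then pihomog mdeg (d - e) a * f else 0.
Proof.
move=> hf; set k := (msize a + d).+1.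
have size_a : (msize a <= k)%N by rewrite leqW ?leq_addr.
rewrite [in LHS](pihomog_partitionE size_a) mulr_suml linear_sum /=.
rewrite (eq_bigr (fun i : 'I_k =>
    if (i + e)%N == d then pihomog mdeg i a * f else 0)); last first.
  move=> i _; have hi := dhomogM (pihomogP mdeg i a) hf.
  case: eqP => [<-|/eqP ne]; [exact: pihomog_dE | exact: pihomog_ne0 hi].
case: leqP => [le_ed|lt_de].
  have lt_k : (d - e < k)%N by rewrite ltnS (leq_trans (leq_subr _ _)) ?leq_addl.
  rewrite (bigD1 (Ordinal lt_k)) //= subnK // eqxx big1 ?addr0 // => i ne_i.
  case: eqP => // sum_i; case/eqP: ne_i; apply: val_inj => /=.
  by rewrite -sum_i addnK.
rewrite big1 // => i _; case: eqP => // sum_i.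
by move: lt_de; rewrite -sum_i ltnNge leq_addl.
Qed.

End MPolyHomogComplements.

Section Forms.
Variable K : fieldType.
Implicit Types p : {mpoly K[2]}.

Lemma deg_dhomog p d : p != 0 -> p \is d.-homog -> deg p = d.
Proof. by move=> p_nz hp; apply: dhomog_uniq p_nz (dhomog_msize hp) hp. Qed.

Lemma form_dhomog p : is_form p -> p \is (deg p).-homog.
Proof. by case=> d /dhomog_msize. Qed.

Lemma inL_coef p : inL p -> p@_(mon2 (deg p) 0) = 1.
Proof. by case. Qed.

End Forms.

Section IdealOfTwoForms.
Variables (K : fieldType) (F f g h : {mpoly K[2]}).
Hypotheses (f_inL : inL f) (g_form : is_form g) (g_def : g = 'X_1 * h).
Hypothesis annihE :
  forall phi, annih F phi <-> exists a b, phi = a * f + b * g.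

Let f_form : is_form f. Proof. by case: f_inL. Qed.

Lemma mcoeff_mon2_mulg p t : (p * g)@_(mon2 t 0) = 0.
Proof. by rewrite g_def mulrCA mcoeff_mulX_eq0 // mnmE. Qed.

Lemma annih_form_decomp th : annih F th -> is_form th ->
  exists a b, [/\ a \is (deg th - deg f).-homog, b \is (deg th - deg g).-homog
    & th = (if (deg f <= deg th)%N then a * f else 0)
         + (if (deg g <= deg th)%N then b * g else 0)].
Proof.
move=> /annihE[a [b th_def]] /form_dhomog th_homog.
exists (pihomog mdeg (deg th - deg f) a), (pihomog mdeg (deg th - deg g) b).
split; try exact: pihomogP.
rewrite -(pihomogMr _ _ (form_dhomog f_form)) -(pihomogMr _ _ (form_dhomog g_form)).
by rewrite -linearD -th_def; apply/esym/pihomog_dE.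
Qed.

Lemma annih_inL_deg_ge th : annih F th -> inL th -> (deg f <= deg th)%N.
Proof.
move=> ath th_inL; have [_ th_form _] := th_inL.
have [a [b [_ _ th_def]]] := annih_form_decomp ath th_form.
rewrite leqNgt; apply/negP => lt_th; have := inL_coef th_inL.
rewrite th_def leqNgt lt_th add0r.
by case: ifP => _; rewrite ?mcoeff_mon2_mulg ?mcoeff0 => /eqP; rewrite eq_sym oner_eq0.
Qed.

Lemma inTheta_f : inTheta F f.
Proof.
split=> //; last exact: annih_inL_deg_ge.
by apply/annihE; exists 1, 0; rewrite mul1r mul0r addr0.
Qed.

Lemma inTheta_addMg psi : (deg g <= deg f)%N ->
  psi \is (deg f - deg g).-homog -> inTheta F (f + psi * g).
Proof.
move=> le_gf psi_homog.
have th_homog : f + psi * g \is (deg f).-homog.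
  rewrite rpredD ?form_dhomog // -(subnK le_gf).
  exact: dhomogM psi_homog (form_dhomog g_form).
have th_coef : (f + psi * g)@_(mon2 (deg f) 0) = 1.
  by rewrite mcoeffD inL_coef // mcoeff_mon2_mulg addr0.
have th_nz : f + psi * g != 0.
  by apply: contra_eq_neq th_coef => ->; rewrite mcoeff0 eq_sym oner_eq0.
have deg_th := deg_dhomog th_nz th_homog.
split.
- by apply/annihE; exists 1, psi; rewrite mul1r.
- by split; [|exists (deg f) | rewrite deg_th].
- by move=> th' ath' th'_inL; rewrite deg_th annih_inL_deg_ge.
Qed.

Lemma inTheta_decomp th : inTheta F th ->
  exists2 psi, psi \is (deg f - deg g).-homog &
    th = f + (if (deg g <= deg f)%N then psi * g else 0).
Proof.
case=> ath th_inL th_min; have [_ th_form _] := th_inL.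
have deg_th : deg th = deg f.
  by apply/eqP; rewrite eqn_leq annih_inL_deg_ge // andbT th_min //; case: inTheta_f.
have [a [b [a_homog b_homog th_def]]] := annih_form_decomp ath th_form.
rewrite deg_th subnn in a_homog b_homog.
rewrite deg_th leqnn (dhomog0_mpolyC a_homog) mul_mpolyC in th_def.
have a0_eq1 : a@_0 = 1.
  have := inL_coef th_inL; rewrite deg_th {1}th_def mcoeffD mcoeffZ inL_coef //.
  by case: ifP => _; rewrite ?mcoeff_mon2_mulg ?mcoeff0 !addr0 mulr1.
by exists b; rewrite // th_def a0_eq1 scale1r.
Qed.

End IdealOfTwoForms.

Theorem corollary3 (K : fieldType) (F f g : {mpoly K[2]}) :
  F != 0 -> is_form F -> VOP F f g ->
  forall theta : {mpoly K[2]},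
    inTheta F theta <->
    (if (deg f < deg g)%N then theta = f
     else theta = f \/
          exists psi : {mpoly K[2]},
            psi \is (deg f - deg g)%N.-homog /\ theta = f + psi * g).
Proof.
move=> _ _ [_ [_ [g_form _]] [f_inL [h g_def]] annihE _] th.
have f_Theta := inTheta_f f_inL g_form g_def annihE.
split=> [th_Theta|].
  have [psi psi_homog ->] := inTheta_decomp f_inL g_form g_def annihE th_Theta.
  case: (ltnP (deg f) (deg g)) => _; first by rewrite addr0.
  by right; exists psi.
case: (ltnP (deg f) (deg g)) => [_ -> //|le_gf [-> //|[psi [psi_homog ->]]]].
exact: inTheta_addMg f_inL g_form g_def annihE _ le_gf psi_homog.
Qed.
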